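(* Let $K\ge1$ and for each $k\in\{1,\dots,K\}$ let $P_{\max,k}>0$, $\mu_k\ge1$, $\Psi_k>0$. Let $q_k^+,q_k^-,c_k^+,c_k^-:\mathbb{R}_+^K\to\mathbb{R}_+$ be differentiable concave functions, and define $$\mathrm{WMEE}(\mathbf p)=\min_{k=1,\dots,K}\frac{q_k^+(\mathbf p)-q_k^-(\mathbf p)}{\mu_kp_k+\Psi_k}.$$ Consider the problem (P): maximize $\mathrm{WMEE}(\mathbf p)$ subject to $0\le p_k\le P_{\max,k}$ and $c_k^+(\mathbf p)-c_k^-(\mathbf p)\ge0$ for all $k$. For a given $\mathbf p_j$, let $\mathcal G_j$ be the problem $$\max_{\mathbf p}\ \min_{k=1,\dots,K}\frac{q_k^+(\mathbf p)-\big[q_k^-(\mathbf p_j)+(\nabla_{\mathbf p}q_k^-(\mathbf p_j))^T(\mathbf p-\mathbf p_j)\big]}{\mu_kp_k+\Psi_k}$$ subject to $0\le p_k\le P_{\max,k}$ and $c_k^+(\mathbf p)-\big[c_k^-(\mathbf p_j)+(\nabla_{\mathbf p}c_k^-(\mathbf p_j))^T(\mathbf p-\mathbf p_j)\big]\ge0$ for all $k$, and let $\mathbf p_j^\star$ denote an optimal solution of $\mathcal G_j$. Let $\mathbf p_0$ be any feasible point of (P) and set $\mathbf p_j=\mathbf p_{j-1}^\star$ for all $j\ge1$. Then the sequence $\{\mathrm{WMEE}(\mathbf p_j^\star)\}_j$ is monotonically increasing and converges.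
   Context: $\nabla_{\mathbf p}f(\mathbf p_j)$ denotes the gradient of $f$ with respect to $\mathbf p$ evaluated at $\mathbf p_j$. The problem (P) models (minimum) energy efficiency maximization, where $q_k^+-q_k^-$ is the achievable rate of link $k$ and $c_k^+-c_k^-\ge0$ are additional constraints. *)

From HB Require Import structures.
From mathcomp Require Import all_boot all_order all_algebra.
From mathcomp Require Import all_classical all_reals all_analysis.
Set Implicit Arguments. Unset Strict Implicit. Unset Printing Implicit Defensive.
Import Order.TTheory GRing.Theory Num.Theory.
Local Open Scope ring_scope.

Section Defs.
Variables (R : realType) (K : nat).

Definition vec := 'I_K -> R.

Definition vadd (u v : vec) : vec := fun k => u k + v k.
Definition vsub (u v : vec) : vec := fun k => u k - v k.
Definition vcomb (t : R) (u v : vec) : vec := fun k => t * u k + (1 - t) * v k.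
Definition dot (u v : vec) : R := \sum_(k < K) u k * v k.
Definition enorm (u : vec) : R := Num.sqrt (\sum_(k < K) u k ^+ 2).

Definition orthant (p : vec) : Prop := forall k, 0 <= p k.

Definition nonneg_on (f : vec -> R) : Prop := forall p, orthant p -> 0 <= f p.

Definition concave_on (f : vec -> R) : Prop :=
  forall p q t, orthant p -> orthant q -> 0 <= t <= 1 ->
    t * f p + (1 - t) * f q <= f (vcomb t p q).

(* g is the gradient of f on R_+^K: Frechet differentiability at every point
   of the orthant, relative to the orthant *)
Definition is_gradient_on (f : vec -> R) (g : vec -> vec) : Prop :=
  forall p, orthant p -> forall e : R, 0 < e -> exists2 d : R, 0 < d &
    forall h, orthant (vadd p h) -> enorm h < d ->
      `|f (vadd p h) - f p - dot (g p) h| <= e * enorm h.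

Definition linz (f : vec -> R) (g : vec -> vec) (pj p : vec) : R :=
  f pj + dot (g pj) (vsub p pj).

End Defs.

Section Problem.
Variables (R : realType) (n : nat).
Local Notation K := n.+1.
Variables (Pmax mu Psi : 'I_K -> R)
  (qp qm cp cm : 'I_K -> vec R K -> R).

Definition minK (F : 'I_K -> R) : R := \big[Num.min/F ord0]_(k < K) F k.

Definition WMEE (p : vec R K) : R :=
  minK (fun k => (qp k p - qm k p) / (mu k * p k + Psi k)).

Definition feasP (p : vec R K) : Prop :=
  forall k, 0 <= p k <= Pmax k /\ 0 <= cp k p - cm k p.

Variables (gqm gcm : 'I_K -> vec R K -> vec R K).

Definition objG (pj p : vec R K) : R :=
  minK (fun k => (qp k p - linz (qm k) (gqm k) pj p) / (mu k * p k + Psi k)).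

Definition feasG (pj p : vec R K) : Prop :=
  forall k, 0 <= p k <= Pmax k /\ 0 <= cp k p - linz (cm k) (gcm k) pj p.

Definition optimalG (pj pstar : vec R K) : Prop :=
  feasG pj pstar /\ forall p, feasG pj p -> objG pj p <= objG pj pstar.

End Problem.

From HB Require Import structures.
From mathcomp Require Import all_boot all_order all_algebra.
From mathcomp Require Import all_classical all_reals all_analysis.
From mathcomp Require Import ring lra.
Import Order.TTheory GRing.Theory Num.Theory numFieldNormedType.Exports.
Local Open Scope classical_set_scope.
Local Open Scope ring_scope.
Set Implicit Arguments. Unset Strict Implicit.

(* A differentiable concave function lies below its tangent planes, so
   linearising the subtracted concave terms q_k^- and c_k^- around p_j makes
   the objective of G_j a lower bound of WMEE and its feasible set a subset of
   that of (P), both tight at p_j.  Since p_j is feasible for G_j, the optimum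
   p_j' of G_j satisfies WMEE(p_j) = obj_j(p_j) <= obj_j(p_j') <= WMEE(p_j').  The
   sequence is bounded above because the rates are bounded on the box
   [0, P_max] (tangent bound on q_k^+, nonnegativity of q_k^-) and the
   denominators are at least Psi_k, hence it converges to its supremum. *)

Section Vectors.
Variables (R : realType) (K : nat).

Lemma enorm_ge0 (h : vec R K) : 0 <= enorm h.
Proof. exact: sqrtr_ge0. Qed.

Lemma enormZ (t : R) (h : vec R K) : 0 <= t ->
  enorm (fun k => t * h k) = t * enorm h.
Proof.
move=> t_ge0; rewrite /enorm.
have -> : \sum_(k < K) (t * h k) ^+ 2 = t ^+ 2 * \sum_(k < K) h k ^+ 2.
  by rewrite big_distrr; apply: eq_bigr => k _; rewrite exprMn.
by rewrite sqrtrM ?sqr_ge0 // sqrtr_sqr ger0_norm.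
Qed.

Lemma dotZr (t : R) (g h : vec R K) : dot g (fun k => t * h k) = t * dot g h.
Proof. by rewrite /dot big_distrr; apply: eq_bigr => k _; rewrite mulrCA. Qed.

Lemma dot_le_box (g h b : vec R K) : (forall k, 0 <= h k <= b k) ->
  dot g h <= \sum_(k < K) `|g k| * b k.
Proof.
move=> hb; apply: ler_sum => k _; have /andP[h_ge0 h_le] := hb k.
apply: le_trans (ler_norm _) _; rewrite normrM (ger0_norm h_ge0).
exact: ler_wpM2l.
Qed.

Lemma linz_id (f : vec R K -> R) (g : vec R K -> vec R K) p : linz f g p p = f p.
Proof. by rewrite /linz /dot big1 ?addr0 // => k _; rewrite /vsub subrr mulr0. Qed.

Lemma concave_linz_gap (f : vec R K -> R) (g : vec R K -> vec R K) (p q : vec R K)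
  (e : R) : concave_on f -> is_gradient_on f g -> orthant p -> orthant q -> 0 < e ->
  f p - linz f g q p <= e * enorm (vsub p q).
Proof.
move=> f_cvx f_grad op oq e_gt0; rewrite /linz.
set h := vsub p q; set N := enorm h; have N_ge0 : 0 <= N := enorm_ge0 h.
have [d d_gt0 hd] := f_grad q oq e e_gt0.
(* a step [t h] towards [p], short enough for the first-order estimate *)
pose t := Num.min 1 (d / (N + 1)).
have t_gt0 : 0 < t by rewrite lt_min ltr01 divr_gt0 //; lra.
have t_le1 : t <= 1 by rewrite ge_min lexx.
have tN_lt : t * N < d.
  have : t * (N + 1) <= d by rewrite -ler_pdivlMr ?ge_min ?lexx ?orbT //; lra.
  nra.
pose ht := fun k => t * h k.
have step_comb : vadd q ht = vcomb t p q.
  by apply: funext => k; rewrite /vadd /ht /vcomb /h /vsub; ring.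
have step_orth : orthant (vadd q ht).
  by rewrite step_comb => k; rewrite /vcomb; have := op k; have := oq k; nra.
have step_norm : enorm ht = t * N by rewrite enormZ //; lra.
have {hd} := hd _ step_orth; rewrite step_norm dotZr step_comb => /(_ tN_lt) tangent.
have := f_cvx p q t op oq; rewrite t_le1 ltW // => /(_ isT) chord.
have := ler_norm (f (vcomb t p q) - f q - t * dot (g q) h).
move=> /le_trans /(_ tangent) estimate.
by rewrite -(ler_pM2l t_gt0); lra.
Qed.

Lemma concave_le_linz (f : vec R K -> R) (g : vec R K -> vec R K) (p q : vec R K) :
  concave_on f -> is_gradient_on f g -> orthant p -> orthant q ->
  f p <= linz f g q p.
Proof.
move=> f_cvx f_grad op oq; rewrite -subr_le0; apply/ler_addgt0Pr => e e_gt0.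
set N := enorm (vsub p q); have N_ge0 : 0 <= N := enorm_ge0 _.
have eN_gt0 : 0 < e / (N + 1) by rewrite divr_gt0 //; lra.
apply: le_trans (concave_linz_gap f_cvx f_grad op oq eN_gt0) _.
by rewrite add0r mulrAC ler_pdivrMr; [rewrite ler_pM2l // lerDl | lra].
Qed.

End Vectors.

Section MinK.
Variables (R : realType) (n : nat).

Lemma minK_le (F : 'I_n.+1 -> R) k : minK F <= F k.
Proof.
rewrite /minK; have : k \in index_enum 'I_n.+1 := mem_index_enum k.
elim: index_enum => [//|a s IH]; rewrite inE big_cons => /orP[/eqP->|ks].
  by rewrite ge_min lexx.
by rewrite ge_min IH // orbT.
Qed.

Lemma le_minK (F : 'I_n.+1 -> R) x : (forall k, x <= F k) -> x <= minK F.
Proof.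
move=> H; apply: (big_ind (fun y => x <= y)) => // a b xa xb.
by rewrite le_min xa xb.
Qed.

Lemma le_minK2 (F G : 'I_n.+1 -> R) : (forall k, F k <= G k) -> minK F <= minK G.
Proof. by move=> FG; apply: le_minK => k; apply: le_trans (minK_le F k) (FG k). Qed.

End MinK.

Lemma ratio_le_bound (R : realType) (N D B P : R) :
  0 < P -> P <= D -> N <= B -> N / D <= `|B| / P.
Proof.
move=> P_gt0 PD NB; have D_gt0 : 0 < D by lra.
have [N_le0|N_gt0] := lerP N 0.
  apply: (@le_trans _ _ 0); first by rewrite mulr_le0_ge0 // invr_ge0 ltW.
  by rewrite divr_ge0 // ltW.
rewrite ler_pdivrMr // mulrAC ler_pdivlMr //.
apply: (@le_trans _ _ (N * D)); first by rewrite ler_wpM2l // ltW.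
by rewrite ler_wpM2r ?(le_trans NB (ler_norm _)) // ltW.
Qed.

Section Linearisation.
Variables (R : realType) (n : nat).
Local Notation K := n.+1.
Variables (Pmax mu Psi : 'I_K -> R) (qp qm cp cm : 'I_K -> vec R K -> R)
  (gqp gqm gcm : 'I_K -> vec R K -> vec R K).
Hypotheses (hmu : forall k, 1 <= mu k) (hPsi : forall k, 0 < Psi k).
Hypotheses (qp_concave : forall k, concave_on (qp k))
  (qp_grad : forall k, is_gradient_on (qp k) (gqp k))
  (qm_ge0 : forall k, nonneg_on (qm k)) (qm_concave : forall k, concave_on (qm k))
  (qm_grad : forall k, is_gradient_on (qm k) (gqm k))
  (cm_concave : forall k, concave_on (cm k))
  (cm_grad : forall k, is_gradient_on (cm k) (gcm k)).

Local Notation feasP := (feasP Pmax cp cm).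
Local Notation feasG := (feasG Pmax cp cm gcm).
Local Notation WMEE := (WMEE mu Psi qp qm).
Local Notation objG := (objG mu Psi qp qm gqm).
Local Notation optimalG := (optimalG Pmax mu Psi qp qm cp cm gqm gcm).

Lemma feasP_orthant p : feasP p -> orthant p.
Proof. by move=> fp k; case: (fp k) => /andP[]. Qed.

Lemma feasG_orthant pj p : feasG pj p -> orthant p.
Proof. by move=> fp k; case: (fp k) => /andP[]. Qed.

Lemma feasG_feasP pj p : orthant pj -> feasG pj p -> feasP p.
Proof.
move=> opj fp k; case: (fp k) => box lin; split => //.
have := concave_le_linz (cm_concave k) (cm_grad k) (feasG_orthant fp) opj; lra.
Qed.

Lemma feasP_feasG p : feasP p -> feasG p p.
Proof. by move=> fp k; rewrite linz_id; exact: fp. Qed.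

Lemma denom_gt0 p k : orthant p -> 0 < mu k * p k + Psi k.
Proof. by move=> op; have := op k; have := hmu k; have := hPsi k; nra. Qed.

Lemma objG_le_WMEE pj p : orthant pj -> orthant p -> objG pj p <= WMEE p.
Proof.
move=> opj op; apply: le_minK2 => k.
apply: ler_wpM2r; first by rewrite invr_ge0 ltW ?denom_gt0.
have := concave_le_linz (qm_concave k) (qm_grad k) op opj; lra.
Qed.

Lemma objG_id p : objG p p = WMEE p.
Proof. by congr minK; apply: funext => k; rewrite linz_id. Qed.

Lemma optimalG_feasP pj ps : feasP pj -> optimalG pj ps -> feasP ps.
Proof. by move=> fpj [fps _]; exact: feasG_feasP (feasP_orthant fpj) fps. Qed.

Lemma optimalG_WMEE_le pj ps : feasP pj -> optimalG pj ps -> WMEE pj <= WMEE ps.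
Proof.
move=> fpj [fps ps_opt]; rewrite -objG_id.
apply: le_trans (ps_opt _ (feasP_feasG fpj)) _.
exact: objG_le_WMEE (feasP_orthant fpj) (feasG_orthant fps).
Qed.

Lemma WMEE_box_bounded :
  exists B, forall p, (forall k, 0 <= p k <= Pmax k) -> WMEE p <= B.
Proof.
pose z : vec R K := fun=> 0; have oz : orthant z by [].
pose B := qp ord0 z + \sum_(k < K) `|gqp ord0 z k| * Pmax k.
exists (`|B| / Psi ord0) => p box; have op k : 0 <= p k by case/andP: (box k).
apply: le_trans (minK_le _ ord0) _; apply: ratio_le_bound => //.
  by have := op ord0; have := hmu ord0; nra.
have := concave_le_linz (qp_concave ord0) (qp_grad ord0) op oz.
have := qm_ge0 ord0 op.
have : dot (gqp ord0 z) (vsub p z) <= \sum_(k < K) `|gqp ord0 z k| * Pmax k.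
  by apply: dot_le_box => k; rewrite /vsub subr0.
rewrite /linz /B; lra.
Qed.

End Linearisation.

Theorem proposition7 (R : realType) (n : nat)
  (Pmax mu Psi : 'I_n.+1 -> R)
  (hPmax : forall k, 0 < Pmax k) (hmu : forall k, 1 <= mu k)
  (hPsi : forall k, 0 < Psi k)
  (qp qm cp cm : 'I_n.+1 -> vec R n.+1 -> R)
  (gqp gqm gcp gcm : 'I_n.+1 -> vec R n.+1 -> vec R n.+1)
  (hqp : forall k, [/\ nonneg_on (qp k), concave_on (qp k) & is_gradient_on (qp k) (gqp k)])
  (hqm : forall k, [/\ nonneg_on (qm k), concave_on (qm k) & is_gradient_on (qm k) (gqm k)])
  (hcp : forall k, [/\ nonneg_on (cp k), concave_on (cp k) & is_gradient_on (cp k) (gcp k)])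
  (hcm : forall k, [/\ nonneg_on (cm k), concave_on (cm k) & is_gradient_on (cm k) (gcm k)])
  (p0 : vec R n.+1) (pstar : nat -> vec R n.+1)
  (hp0 : feasP Pmax cp cm p0)
  (hopt0 : optimalG Pmax mu Psi qp qm cp cm gqm gcm p0 (pstar 0%N))
  (hopt : forall j : nat,
     optimalG Pmax mu Psi qp qm cp cm gqm gcm (pstar j) (pstar j.+1)) :
  (forall j : nat, WMEE mu Psi qp qm (pstar j) <= WMEE mu Psi qp qm (pstar j.+1))
  /\ exists l : R, WMEE mu Psi qp qm (pstar j) @[j --> \oo] --> l.
Proof.
have [_ qp_concave qp_grad] := all_and3 hqp.
have [qm_ge0 qm_concave qm_grad] := all_and3 hqm.
have [_ cm_concave cm_grad] := all_and3 hcm.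
have feas j : feasP Pmax cp cm (pstar j).
  elim: j => [|j IH]; first exact: (optimalG_feasP cm_concave cm_grad hp0 hopt0).
  exact: (optimalG_feasP cm_concave cm_grad IH (hopt j)).
have mono j : WMEE mu Psi qp qm (pstar j) <= WMEE mu Psi qp qm (pstar j.+1).
  exact: (optimalG_WMEE_le hmu hPsi qm_concave qm_grad (feas j) (hopt j)).
split => //.
have [B WMEE_le] := WMEE_box_bounded Pmax hmu hPsi qp_concave qp_grad qm_ge0.
exists (sup (range (fun j => WMEE mu Psi qp qm (pstar j)))).
apply: nondecreasing_cvgn; first exact/nondecreasing_seqP.
by exists B => _ [j _ <-]; apply: WMEE_le => k; case: (feas j k).
Qed.
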